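(* Let $(X,\le,\to,\rightsquigarrow,0,1)$ be a bounded sup-commutative pseudo BCK-algebra and let $(\exists,\forall)$ be a pair of strong synchronized maps on $X$ such that $\exists$ is a weak existential quantifier (equivalently, $\forall$ is a weak universal quantifier). Then $\forall(x\wedge y)=\forall x\wedge\forall y$ and $\exists(x\vee y)=\exists x\vee\exists y$ for all $x,y\in X$.
   Context: A quantum B-algebra is a partially ordered set $(X,\le)$ with two binary operations $\to$ and $\rightsquigarrow$ such that for all $x,y,z\in X$: $y\to z\le (x\to y)\to(x\to z)$; $y\rightsquigarrow z\le (x\rightsquigarrow y)\to(x\rightsquigarrow z)$; $y\le z$ implies $x\to y\le x\to z$; and $x\le y\to z$ iff $y\le x\rightsquigarrow z$. A bounded pseudo BCK-algebra $(X,\le,\to,\rightsquigarrow,0,1)$ is a quantum B-algebra with a greatest element $1$ satisfying $1\to x=1\rightsquigarrow x=x$ and a least element $0$; then $x\le y$ iff $x\to y=1$ iff $x\rightsquigarrow y=1$. It is sup-commutative if $(x\to y)\rightsquigarrow y=(y\to x)\rightsquigarrow x$ and $(x\rightsquigarrow y)\to y=(y\rightsquigarrow x)\to x$ for all $x,y$. Write $x^{-}=x\to 0$, $x^{\sim}=x\rightsquigarrow 0$; a bounded sup-commutative pseudo BCK-algebra satisfies $(x^{-})^{\sim}=(x^{\sim})^{-}=x$, and $(X,\le)$ is a lattice with $x\vee y=(x\to y)\rightsquigarrow y=(x\rightsquigarrow y)\to y$ and $x\wedge y=(x^{-}\vee y^{-})^{\sim}=(x^{\sim}\vee y^{\sim})^{-}$.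 Define $x\odot y=(x\to y^{-})^{\sim}$ and $x\oplus y=y^{\sim}\to x$ $(=x^{-}\rightsquigarrow y)$. A map $\tau:X\to X$ is good if $(\tau(x^{-}))^{\sim}=(\tau(x^{\sim}))^{-}$ for all $x$; good maps $\tau,\sigma$ are synchronized if $\sigma(x)=(\tau(x^{-}))^{\sim}=(\tau(x^{\sim}))^{-}$ for all $x$; strong synchronized if moreover $\tau\circ\sigma=\sigma$ (equivalently $\sigma\circ\tau=\tau$). A good map $\exists$ is a weak existential quantifier if for all $x,y$: $\exists 0=0$; $\exists 1=1$; $x\le\exists x$; $\exists(x\oplus\exists y)=\exists(\exists x\oplus y)=\exists x\oplus\exists y$; $\exists(x\oplus x)=\exists x\oplus\exists x$; $\exists(x\odot\exists y)=\exists(\exists x\odot y)=\exists x\odot\exists y$. A good map $\forall$ is a weak universal quantifier if for all $x,y$: $\forall 1=1$; $\forall 0=0$; $\forall x\le x$; $\forall(x\odot\forall y)=\forall(\forall x\odot y)=\forall x\odot\forall y$; $\forall(x\odot x)=\forall x\odot\forall x$; $\forall(x\oplus\forall y)=\forall(\forall x\oplus y)=\forall x\oplus\forall y$. *)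

Set Implicit Arguments.

Section PseudoBCK.
Variables (X : Type) (le : X -> X -> Prop) (imp simp : X -> X -> X) (zero one : X).

Definition is_poset : Prop :=
  (forall x, le x x) /\
  (forall x y, le x y -> le y x -> x = y) /\
  (forall x y z, le x y -> le y z -> le x z).

Definition is_quantum_B_algebra : Prop :=
  is_poset /\
  (forall x y z, le (imp y z) (imp (imp x y) (imp x z))) /\
  (forall x y z, le (simp y z) (imp (simp x y) (simp x z))) /\
  (forall x y z, le y z -> le (imp x y) (imp x z)) /\
  (forall x y z, le x (imp y z) <-> le y (simp x z)).

Definition is_bounded_pseudo_BCK : Prop :=
  is_quantum_B_algebra /\
  (forall x, le x one) /\
  (forall x, imp one x = x) /\
  (forall x, simp one x = x) /\
  (forall x, le zero x).

Definition is_sup_commutative : Prop :=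
  (forall x y, simp (imp x y) y = simp (imp y x) x) /\
  (forall x y, imp (simp x y) y = imp (simp y x) x).

Definition is_bsc_pseudo_BCK : Prop :=
  is_bounded_pseudo_BCK /\ is_sup_commutative.

Definition nminus (x : X) : X := imp x zero.
Definition ntilde (x : X) : X := simp x zero.
Definition bjoin (x y : X) : X := simp (imp x y) y.
Definition bmeet (x y : X) : X := ntilde (bjoin (nminus x) (nminus y)).
Definition bodot (x y : X) : X := ntilde (imp x (nminus y)).
Definition boplus (x y : X) : X := imp (ntilde y) x.

Definition good_map (t : X -> X) : Prop :=
  forall x, ntilde (t (nminus x)) = nminus (t (ntilde x)).

Definition synchronized (t s : X -> X) : Prop :=
  good_map t /\ good_map s /\
  (forall x, s x = ntilde (t (nminus x)) /\ s x = nminus (t (ntilde x))).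

Definition strong_synchronized (t s : X -> X) : Prop :=
  synchronized t s /\ (forall x, t (s x) = s x).

Definition weak_existential_quantifier (E : X -> X) : Prop :=
  good_map E /\
  E zero = zero /\ E one = one /\
  (forall x, le x (E x)) /\
  (forall x y, E (boplus x (E y)) = boplus (E x) (E y) /\
               E (boplus (E x) y) = boplus (E x) (E y)) /\
  (forall x, E (boplus x x) = boplus (E x) (E x)) /\
  (forall x y, E (bodot x (E y)) = bodot (E x) (E y) /\
               E (bodot (E x) y) = bodot (E x) (E y)).

Definition weak_universal_quantifier (A : X -> X) : Prop :=
  good_map A /\
  A one = one /\ A zero = zero /\
  (forall x, le (A x) x) /\
  (forall x y, A (bodot x (A y)) = bodot (A x) (A y) /\
               A (bodot (A x) y) = bodot (A x) (A y)) /\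
  (forall x, A (bodot x x) = bodot (A x) (A x)) /\
  (forall x y, A (boplus x (A y)) = boplus (A x) (A y) /\
               A (boplus (A x) y) = boplus (A x) (A y)).

End PseudoBCK.

(* The universal quantifier is the dual [A x = (E x^-)^~] of the existential one, which turns
   meets into joins, so everything reduces to [E (x \/ y) = E x \/ E y].  The inequality [>=]
   is monotonicity of [E]; monotonicity itself comes from the [odot] axiom, since [u <= E v]
   makes [u odot (E v)^~] vanish.  For [<=], the [oplus] axiom together with strong
   synchronization shows that the fixed points of [E] are closed under the implications, so
   [E x \/ E y] is a fixed point above [x \/ y], whence [E (x \/ y) <= E (E x \/ E y) = E x \/ E y]. *)


Set Implicit Arguments.

Section BoundedPseudoBCK.

Variables (X : Type) (le : X -> X -> Prop) (imp simp : X -> X -> X) (zero one : X).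
Hypothesis bck : is_bounded_pseudo_BCK le imp simp zero one.

Local Notation neg := (nminus imp zero).
Local Notation tneg := (ntilde simp zero).
Local Notation join := (bjoin imp simp).
Local Notation oplus := (boplus imp simp zero).
Local Notation odot := (bodot imp simp zero).

Lemma le_refl x : le x x.
Proof. exact (proj1 (proj1 (proj1 bck)) x). Qed.

Lemma le_antisym x y : le x y -> le y x -> x = y.
Proof. exact (proj1 (proj2 (proj1 (proj1 bck))) x y). Qed.

Lemma le_trans x y z : le x y -> le y z -> le x z.
Proof. exact (proj2 (proj2 (proj1 (proj1 bck))) x y z). Qed.

Lemma le_imp_imp x y z : le (imp y z) (imp (imp x y) (imp x z)).
Proof. exact (proj1 (proj2 (proj1 bck)) x y z). Qed.

Lemma le_simp_imp x y z : le (simp y z) (imp (simp x y) (simp x z)).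
Proof. exact (proj1 (proj2 (proj2 (proj1 bck))) x y z). Qed.

Lemma le_imp_simp x y z : le x (imp y z) <-> le y (simp x z).
Proof. exact (proj2 (proj2 (proj2 (proj2 (proj1 bck)))) x y z). Qed.

Lemma le_top x : le x one.
Proof. exact (proj1 (proj2 bck) x). Qed.

Lemma imp_1x x : imp one x = x.
Proof. exact (proj1 (proj2 (proj2 bck)) x). Qed.

Lemma simp_1x x : simp one x = x.
Proof. exact (proj1 (proj2 (proj2 (proj2 bck))) x). Qed.

Lemma le_0x x : le zero x.
Proof. exact (proj2 (proj2 (proj2 (proj2 bck))) x). Qed.

Lemma le_iff_imp_one x y : le x y <-> imp x y = one.
Proof.
  split; intro H.
  - apply le_antisym; [apply le_top |].
    apply le_imp_simp. rewrite simp_1x. exact H.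
  - rewrite <- (simp_1x y). apply le_imp_simp. rewrite H. apply le_refl.
Qed.

Lemma le_iff_simp_one x y : le x y <-> simp x y = one.
Proof.
  split; intro H.
  - apply le_antisym; [apply le_top |].
    apply le_imp_simp. rewrite imp_1x. exact H.
  - rewrite <- (imp_1x y). apply le_imp_simp. rewrite H. apply le_refl.
Qed.

Lemma imp_antitone a b z : le a b -> le (imp b z) (imp a z).
Proof.
  intro H. rewrite <- (imp_1x (imp a z)), <- (proj1 (le_iff_imp_one a b) H).
  apply le_imp_imp.
Qed.

Lemma simp_antitone a b z : le a b -> le (simp b z) (simp a z).
Proof.
  intro H. rewrite <- (imp_1x (simp a z)), <- (proj1 (le_iff_simp_one a b) H).
  apply le_simp_imp.
Qed.

Lemma le_bjoin_l x y : le x (join x y).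
Proof. apply le_imp_simp, le_refl. Qed.

Lemma le_bjoin_r x y : le y (join x y).
Proof.
  apply le_imp_simp. rewrite (proj1 (le_iff_imp_one y y) (le_refl y)). apply le_top.
Qed.

(* With [->] (rather than [~>]) in the middle of the second quantum B-algebra axiom, its
   instance [x = 1] and the adjunction force the two implications to coincide.  This is used
   only in [E_simp_fixed]; everything else holds for genuinely non-commutative algebras. *)
Lemma simp_imp x y : simp x y = imp x y.
Proof.
  apply le_antisym.
  - pose proof (le_simp_imp one x y) as H. rewrite !simp_1x in H. exact H.
  - apply le_imp_simp, (le_trans (le_bjoin_l x y)).
    pose proof (le_simp_imp one (imp x y) y) as H. rewrite !simp_1x in H. exact H.
Qed.

Hypothesis sc : is_sup_commutative imp simp.

Lemma tneg_negK x : tneg (neg x) = x.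
Proof.
  unfold ntilde, nminus. rewrite (proj1 sc), (proj1 (le_iff_imp_one zero x) (le_0x x)).
  apply simp_1x.
Qed.

Lemma neg_tnegK x : neg (tneg x) = x.
Proof.
  unfold ntilde, nminus. rewrite (proj2 sc), (proj1 (le_iff_simp_one zero x) (le_0x x)).
  apply imp_1x.
Qed.

Lemma bjoin_least x y c : le x c -> le y c -> le (join x y) c.
Proof.
  intros hx hy. apply (le_trans (simp_antitone y (imp_antitone y hx))).
  rewrite (proj1 sc), (proj1 (le_iff_imp_one y c) hy), simp_1x. apply le_refl.
Qed.

Lemma boplus_neg_r a b : oplus b (neg a) = imp a b.
Proof. unfold boplus. rewrite tneg_negK. reflexivity. Qed.

Lemma bodot_tneg_r u v : odot u (tneg v) = tneg (imp u v).
Proof. unfold bodot. rewrite neg_tnegK. reflexivity. Qed.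

Variables (E A : X -> X).
Hypothesis sync : strong_synchronized imp simp zero E A.
Hypothesis HE : weak_existential_quantifier le imp simp zero one E.

Lemma A_tneg x : A x = tneg (E (neg x)).
Proof. exact (proj1 (proj2 (proj2 (proj1 sync)) x)). Qed.

Lemma A_neg x : A x = neg (E (tneg x)).
Proof. exact (proj2 (proj2 (proj2 (proj1 sync)) x)). Qed.

Lemma E_zero : E zero = zero.
Proof. exact (proj1 (proj2 HE)). Qed.

Lemma le_E x : le x (E x).
Proof. exact (proj1 (proj2 (proj2 (proj2 HE))) x). Qed.

Lemma E_boplus x y : E (oplus x (E y)) = oplus (E x) (E y) /\ E (oplus (E x) y) = oplus (E x) (E y).
Proof. exact (proj1 (proj2 (proj2 (proj2 (proj2 HE)))) x y). Qed.

Lemma E_bodot x y : E (odot x (E y)) = odot (E x) (E y) /\ E (odot (E x) y) = odot (E x) (E y).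
Proof. exact (proj2 (proj2 (proj2 (proj2 (proj2 (proj2 HE))))) x y). Qed.

Lemma E_neg_fixed w : E (neg (E w)) = neg (E w).
Proof.
  pose proof (proj2 sync (neg w)) as H. rewrite A_neg, tneg_negK in H. exact H.
Qed.

Lemma E_tneg_fixed w : E (tneg (E w)) = tneg (E w).
Proof.
  pose proof (proj2 sync (tneg w)) as H. rewrite A_tneg, neg_tnegK in H. exact H.
Qed.

Lemma E_imp_fixed a b : E (imp (E a) (E b)) = imp (E a) (E b).
Proof.
  pose proof (proj2 (E_boplus b (neg (E a)))) as H.
  rewrite E_neg_fixed, !boplus_neg_r in H. exact H.
Qed.

Lemma E_simp_fixed a b : E (simp (E a) (E b)) = simp (E a) (E b).
Proof. rewrite !simp_imp. apply E_imp_fixed. Qed.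

Lemma E_monotone u v : le u v -> le (E u) (E v).
Proof.
  intro H.
  pose proof (proj1 (E_bodot u (tneg (E v)))) as K.
  rewrite E_tneg_fixed, !bodot_tneg_r in K.
  rewrite (proj1 (le_iff_imp_one u (E v)) (le_trans H (le_E v))) in K.
  unfold ntilde in K at 1. rewrite simp_1x, E_zero in K.
  apply le_iff_imp_one.
  rewrite <- (neg_tnegK (imp (E u) (E v))), <- K.
  apply (proj1 (le_iff_imp_one zero zero) (le_0x zero)).
Qed.

Lemma E_bjoin x y : E (join x y) = join (E x) (E y).
Proof.
  assert (fixed : E (join (E x) (E y)) = join (E x) (E y)).
  { unfold bjoin. rewrite <- (E_imp_fixed x y). apply E_simp_fixed. }
  apply le_antisym.
  - rewrite <- fixed. apply E_monotone, bjoin_least.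
    + apply (le_trans (le_E x)), le_bjoin_l.
    + apply (le_trans (le_E y)), le_bjoin_r.
  - apply bjoin_least; apply E_monotone; [apply le_bjoin_l | apply le_bjoin_r].
Qed.

Lemma A_bmeet x y : A (bmeet imp simp zero x y) = bmeet imp simp zero (A x) (A y).
Proof. unfold bmeet. rewrite !A_tneg, !neg_tnegK, E_bjoin. reflexivity. Qed.

End BoundedPseudoBCK.

Theorem lemma6p4 (X : Type) (le : X -> X -> Prop) (imp simp : X -> X -> X)
  (zero one : X) (E A : X -> X) :
  is_bsc_pseudo_BCK le imp simp zero one ->
  strong_synchronized imp simp zero E A ->
  weak_existential_quantifier le imp simp zero one E ->
  forall x y : X,
    A (bmeet imp simp zero x y) = bmeet imp simp zero (A x) (A y) /\
    E (bjoin imp simp x y) = bjoin imp simp (E x) (E y).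
Proof.
  intros [bck sc] sync HE x y.
  split; [exact (A_bmeet bck sc sync HE x y) | exact (E_bjoin bck sc sync HE x y)].
Qed.
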